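(* For every odd prime $p$, $$\sum_{k=0}^{p-1} (k+1)_{\frac{p-1}{2}}^2 \equiv -1 \pmod{p}.$$
   Context: $(a)_n = a(a+1)\cdots(a+n-1)$ denotes the rising factorial, with $(a)_0 = 1$. *)

From mathcomp Require Import all_boot all_order all_algebra.
Set Implicit Arguments. Unset Strict Implicit. Unset Printing Implicit Defensive.

Definition rising (a n : nat) : nat := \prod_(0 <= i < n) (a + i).

From mathcomp Require Import all_boot all_order all_algebra.
From mathcomp Require Import zify.

Set Implicit Arguments.
Unset Strict Implicit.
Unset Printing Implicit Defensive.
Import GRing.Theory.

(* Work in a field of characteristic p = 2n + 1.  For k <= n, reducing
   n + 1 + i to -(n - i) modulo p gives (k+1)_n = (-1)^k n! C(n, k); for
   n < k < p the factors k+1, ..., k+n run through p, so (k+1)_n = 0.  The sum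
   is therefore n!^2 sum_k C(n, k)^2 = n!^2 C(2n, n) = (2n)! = (p-1)!, which is
   -1 by Wilson's theorem. *)

Lemma rising_mul_fact a m : rising a.+1 m * a`! = (a + m)`!.
Proof.
elim: m => [|m IHm]; first by rewrite /rising big_geq // mul1n addn0.
rewrite /rising big_nat_recr //= -/(rising a.+1 m) mulnAC IHm addnS factS.
by rewrite mulnC addSn.
Qed.

Lemma prime_dvd_fact p m : prime p -> (p %| m`!) = (p <= m).
Proof.
move=> p_prime; apply/idP/idP => [|le_pm]; last by rewrite dvdn_fact ?prime_gt0.
elim: m => [|m IHm]; first by rewrite fact0 dvdn1 => /eqP p1; rewrite p1 in p_prime.
rewrite factS Euclid_dvdM // => /orP[/dvdn_leq -> // | /IHm]; exact: leqW.
Qed.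

Lemma sum_binomial_sqr n : \sum_(k < n.+1) 'C(n, k) ^ 2 = 'C(n.*2, n).
Proof.
rewrite -addnn -binomial.Vandermonde; apply: eq_bigr => k _.
by rewrite bin_sub ?mulnn // -ltnS.
Qed.

Lemma sum_fact_binomial_sqr n :
  \sum_(k < n.+1) (n`! * 'C(n, k)) ^ 2 = (n.*2)`!.
Proof.
under eq_bigr do rewrite expnMn.
rewrite -big_distrr /= sum_binomial_sqr -addnn -(bin_fact (leq_addr n n)).
by rewrite addnK mulnn mulnC.
Qed.

Section PrimeCharacteristic.

Variables (R : fieldType) (p : nat).
Hypothesis charRp : p \in [pchar R]%R.

Local Open Scope ring_scope.

Let p_prime : prime p := GRing.pcharf_prime charRp.

Lemma natr_fact_eq0 m : (m`!%:R == 0 :> R) = (p <= m)%N.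
Proof. by rewrite -(dvdn_pcharf charRp) prime_dvd_fact. Qed.

Lemma Wilson_pchar : (p.-1)`!%:R = -1 :> R.
Proof.
apply/eqP; rewrite -addr_eq0 natr1 -(dvdn_pcharf charRp).
by rewrite -Wilson ?prime_gt1.
Qed.

Lemma natr_rising_sub a k :
  (a <= p)%N -> (rising (p - a) k)%:R = (-1) ^+ k * (a ^_ k)%:R :> R.
Proof.
move=> le_ap; elim: k => [|k IHk]; first by rewrite /rising big_geq // mul1r.
rewrite /rising big_nat_recr //= -/(rising (p - a) k) natrM IHk ffactnSr.
have [le_ka | lt_ak] := leqP k a; last by rewrite ffact_small // !(mul0r, mulr0).
have -> : (p - a + k)%:R = - (a - k)%:R :> R.
  apply/eqP; rewrite -addr_eq0 -natrD -(dvdn_pcharf charRp).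
  by have -> : (p - a + k + (a - k) = p)%N by lia.
by rewrite natrM exprS -mulrA !mulrN mulN1r mulrA.
Qed.

Variable n : nat.
Hypothesis p_half : p = n.*2.+1.

Lemma natr_rising_half k :
  (k <= n)%N -> (rising k.+1 n)%:R = (-1) ^+ k * (n`! * 'C(n, k))%:R :> R.
Proof.
move=> le_kn.
have facts_neq0 : (k`! * (n - k)`!)%:R != 0 :> R.
  by rewrite natrM mulf_neq0 // natr_fact_eq0 p_half -ltnNge; lia.
have swap_halves : (rising k.+1 n * (k`! * (n - k)`!)
                    = rising n.+1 k * (n`! * (n - k)`!))%N.
  by rewrite mulnA rising_mul_fact addnC -rising_mul_fact mulnA.
apply: (mulIf facts_neq0).
rewrite -natrM swap_halves -mulrA -natrM -mulnA bin_fact // natrM.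
have -> : n.+1 = (p - n)%N by rewrite p_half; lia.
rewrite natr_rising_sub; last by rewrite p_half; lia.
by rewrite -mulrA -natrM mulnCA ffact_fact.
Qed.

Lemma natr_rising_half_eq0 k : (n < k < p)%N -> (rising k.+1 n)%:R = 0 :> R.
Proof.
move=> /andP[lt_nk lt_kp].
have /eqP : (rising k.+1 n * k`!)%:R = 0 :> R.
  by apply/eqP; rewrite rising_mul_fact natr_fact_eq0 p_half; lia.
by rewrite natrM mulf_eq0 natr_fact_eq0 leqNgt lt_kp orbF => /eqP.
Qed.

Lemma natr_sum_rising_half_sqr :
  (\sum_(0 <= k < p) rising k.+1 n ^ 2)%N%:R = -1 :> R.
Proof.
have le_np : (n < p)%N by rewrite p_half; lia.
rewrite natr_sum (big_cat_nat (leq0n n.+1) le_np) /=.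
rewrite [X in _ + X]big_nat_cond [X in _ + X]big1 ?addr0; last first.
  by move=> k /andP[lt_nkp _]; rewrite natrX natr_rising_half_eq0 // expr0n.
rewrite big_mkord -Wilson_pchar.
have -> : p.-1 = n.*2 by rewrite p_half.
rewrite -sum_fact_binomial_sqr [RHS]natr_sum.
apply: eq_bigr => k _.
by rewrite natrX [RHS]natrX (natr_rising_half (ltn_ord k)) exprMn sqrr_sign mul1r.
Qed.

End PrimeCharacteristic.

Theorem lemma2p9 (p : nat) :
  prime p -> odd p ->
  ((\sum_(0 <= k < p) ((rising k.+1 p.-1./2) ^ 2)%N %:Z) = -1 %[mod p%:Z])%Z.
Proof.
move=> p_prime p_odd.
have p_half : p = (p.-1./2).*2.+1.
  have p_gt0 := prime_gt0 p_prime.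
  by rewrite even_halfK ?prednK // -oddS prednK.
have /eqP := natr_sum_rising_half_sqr (pchar_Fp p_prime) p_half.
rewrite -addr_eq0 natr1 -(dvdn_pcharf (pchar_Fp p_prime)).
rewrite -(big_morph Posz PoszD (erefl 0%Z)) => dvd_p.
by apply/eqP; rewrite eqz_mod_dvd opprK -PoszD addn1 dvdzE absz_nat.
Qed.
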